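(* Let $\gamma\in(\tfrac12,1)$ and $\kappa>0$. There exists a constant $c>0$ (depending only on $\gamma$ and $\kappa$) such that for every $\ell\in(0,1)$, every $t_0\in(0,1)$, every $n\ge2$ and every $s\in(0,1)$, \[ \nu^{t_0}_{\ell,n}(s)\le \alpha_n s^{-\gamma}+\mathbf 1\{s\ge\ell\}\,\beta_n s^{\gamma-1}, \] where the sequences $(\alpha_n),(\beta_n)$ are defined by $\alpha_1=\kappa t_0^{\gamma-1}$, $\beta_1=\kappa t_0^{-\gamma}$ and \[ \alpha_{n+1}=c\big(\alpha_n\log(1/\ell)+\beta_n\big),\qquad \beta_{n+1}=c\big(\alpha_n\ell^{1-2\gamma}+\beta_n\log(1/\ell)\big). \]
   Context: For $\ell\in(0,1)$, $t_0\in(0,1)$, $\kappa>0$ and $n\in\mathbb N$, define for $s\in(0,1)$ \[ \nu^{t_0}_{\ell,n}(s):=\int_\ell^1\mathrm dt_1\cdots\int_\ell^1\mathrm dt_{n-1}\;\kappa\,(t_{n-1}\wedge s)^{-\gamma}(t_{n-1}\vee s)^{\gamma-1}\prod_{k=1}^{n-1}\kappa\,(t_{k-1}\wedge t_k)^{-\gamma}(t_{k-1}\vee t_k)^{\gamma-1} \] (for $n=1$ there are no integrals and the product is empty, so $\nu^{t_0}_{\ell,1}(s)=\kappa(t_0\wedge s)^{-\gamma}(t_0\vee s)^{\gamma-1}$). Equivalently $\nu^{t_0}_{\ell,n}(s)=\int_\ell^1\mathrm du\,\nu^{t_0}_{\ell,n-1}(u)\,\kappa(u\wedge s)^{-\gamma}(u\vee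 s)^{\gamma-1}$ for $n\ge2$. *)

From HB Require Import structures.
From mathcomp Require Import all_boot all_order all_algebra.
From mathcomp Require Import all_classical all_reals all_analysis.
Set Implicit Arguments. Unset Strict Implicit. Unset Printing Implicit Defensive.
Import Order.TTheory GRing.Theory Num.Theory.
Import numFieldNormedType.Exports.
Local Open Scope classical_set_scope.
Local Open Scope ring_scope.

Definition kern {R : realType} (gamma kappa a b : R) : R :=
  kappa * (Num.min a b) `^ (- gamma) * (Num.max a b) `^ (gamma - 1).

(* nu_ell^{t0} indexed by n.+1 : nuaux k = nu_{k+1}; values in \bar R
   (nonnegative integrands, Lebesgue integral over [ell,1]). *)
Fixpoint nuaux {R : realType} (gamma kappa ell t0 : R) (k : nat) (s : R) : \bar R :=
  match k with
  | O => (kern gamma kappa t0 s)%:E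
  | k'.+1 => (\int[@lebesgue_measure R]_(u in `[ell, 1%R]) 
               (nuaux gamma kappa ell t0 k' u * (kern gamma kappa u s)%:E))%E
  end.

Definition nu {R : realType} (gamma kappa ell t0 : R) (n : nat) (s : R) : \bar R :=
  nuaux gamma kappa ell t0 n.-1 s.

(* (alpha_{k+1}, beta_{k+1}) *)
Fixpoint abaux {R : realType} (gamma kappa c ell t0 : R) (k : nat) : R * R :=
  match k with
  | O => (kappa * t0 `^ (gamma - 1), kappa * t0 `^ (- gamma))
  | k'.+1 => let ab := abaux gamma kappa c ell t0 k' in
      (c * (ab.1 * ln (ell^-1) + ab.2),
       c * (ab.1 * ell `^ (1 - 2 * gamma) + ab.2 * ln (ell^-1)))
  end.

Definition alpha {R : realType} (gamma kappa c ell t0 : R) (n : nat) : R :=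
  (abaux gamma kappa c ell t0 n.-1).1.
Definition beta {R : realType} (gamma kappa c ell t0 : R) (n : nat) : R :=
  (abaux gamma kappa c ell t0 n.-1).2.

From HB Require Import structures.
From mathcomp Require Import all_boot all_order all_algebra.
From mathcomp Require Import all_classical all_reals all_analysis.
From mathcomp Require Import ring lra.
Import Order.TTheory GRing.Theory Num.Theory.
Import numFieldNormedType.Exports.
Local Open Scope classical_set_scope.
Local Open Scope ring_scope.

(* Take c = kappa / (2 gamma - 1) and prove by induction the cruder bound
   nu_n(u) <= alpha_n u^-gamma + beta_n u^(gamma-1) for u in [ell, 1].
   Splitting the kernel at u = s, the integrand of nu_(n+1)(s) is dominated
   by a combination of u^-1, u^(2 gamma - 2) and u^(-2 gamma), where the
   last power (and half of the first) only occurs for u <= s, hence only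
   when ell <= s.  Over [ell, 1] these powers integrate to ln(1/ell), at most
   1/(2 gamma - 1), and at most ell^(1 - 2 gamma)/(2 gamma - 1), and c >= kappa
   absorbs the constants. *)

(* The integral of a nonnegative function is a supremum over the simple
   functions below it, so it is monotone even without measurability. *)
Lemma ge0_le_integral_nonmeas d (T : measurableType d) (R : realType)
    (mu : {measure set T -> \bar R}) (D : set T) (f g : T -> \bar R) :
  (forall x, D x -> 0 <= f x)%E -> (forall x, D x -> f x <= g x)%E ->
  (\int[mu]_(x in D) f x <= \int[mu]_(x in D) g x)%E.
Proof.
move=> f0 fg.
have g0 x : D x -> (0 <= g x)%E by move=> Dx; exact: le_trans (f0 x Dx) (fg x Dx).
rewrite !ge0_integralE //; apply: ereal_sup_le => _ [h hf <-].
exists h => // x; apply: le_trans (hf x) _.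
by rewrite /patch; case: ifP => // /set_mem Dx; exact: fg.
Qed.

Section power_integrals.
Variable R : realType.
Local Notation mu := (@lebesgue_measure R).

Lemma powRD_gt0 (x r s : R) : 0 < x -> x `^ (r + s) = x `^ r * x `^ s.
Proof. by move=> x0; rewrite powRD // (gt_eqF x0) implybT. Qed.

Lemma continuous_powR_gt0 (p x : R) : 0 < x -> {for x, continuous (@powR R ^~ p)}.
Proof.
move=> x0; apply: differentiable_continuous; apply/derivable1_diffP.
by apply: derivable_powR; rewrite in_itv /= andbT.
Qed.

Lemma continuous_FTC2_gt0 {f F : R -> R} {a b : R} : 0 < a -> a < b ->
  (forall x : R, 0 < x -> is_derive x 1 F (f x)) ->
  (forall x : R, 0 < x -> {for x, continuous f}) ->
  (\int[mu]_(x in `[a, b]) (f x)%:E = (F b - F a)%:E)%E.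
Proof.
move=> a0 ab dF cf.
have cF x : 0 < x -> {for x, continuous F}.
  move=> x0; apply: differentiable_continuous; apply/derivable1_diffP.
  by case: (dF x x0).
rewrite EFinB; apply: continuous_FTC2 => //.
- apply: continuous_in_subspaceT => x; rewrite inE /= in_itv /= => /andP[ax _].
  exact/cf/(lt_le_trans a0 ax).
- split.
  + by move=> x; rewrite in_itv /= => /andP[ax _]; case: (dF x (lt_trans a0 ax)).
  + exact/cvg_at_right_filter/cF.
  + exact/cvg_at_left_filter/cF/(lt_trans a0 ab).
- move=> x; rewrite in_itv /= => /andP[ax _].
  by have := dF x (lt_trans a0 ax) => dFx; rewrite derive1E derive_val.
Qed.

Lemma integral_l1_ln_powR (q A B C l : R) : q != 0 -> 0 < l -> l < 1 ->
  (\int[mu]_(x in `[l, 1%R]) (A * x `^ (-1) + B * x `^ (q - 1) + C * x `^ (- q - 1))%:E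
   = (A * ln l^-1 + B * (1 - l `^ q) / q + C * (l `^ (- q) - 1) / q)%:E)%E.
Proof.
move=> q0 l0 l1.
pose f x := A * x `^ (-1) + B * x `^ (q - 1) + C * x `^ (- q - 1).
pose F := A \*: (@ln R) + (B / q) \*: (@powR R ^~ q) + (- C / q) \*: (@powR R ^~ (- q)).
have dF (x : R) : 0 < x -> is_derive x 1 F (f x).
  move=> x0; apply: is_derive_eq.
    apply: is_deriveD; first apply: is_deriveD.
    - by apply: is_deriveZ; exact: is_derive1_ln.
    - by apply: is_deriveZ; exact: is_derive1_powR.
    - by apply: is_deriveZ; exact: is_derive1_powR.
  rewrite /f powR_inv1 ?ltW // /GRing.scale /=; field.
  by rewrite q0 gt_eqF.
have cf (x : R) : 0 < x -> {for x, continuous f}.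
  move=> x0; have -> : f = A \*: (@powR R ^~ (-1)) + B \*: (@powR R ^~ (q - 1))
                           + C \*: (@powR R ^~ (- q - 1)) by [].
  by apply: continuousD; first apply: continuousD;
    apply: continuousZl_tmp; exact: continuous_powR_gt0.
rewrite (continuous_FTC2_gt0 l0 l1 dF cf); congr EFin.
have FE x : F x = A * ln x + B / q * x `^ q + - C / q * x `^ (- q) by [].
rewrite !FE ln1 !powR1 lnV ?posrE //.
by field.
Qed.

End power_integrals.

Section kernel.
Variables (R : realType) (gamma kappa : R).
Hypothesis kappa_ge0 : 0 <= kappa.

Lemma kern_ge0 (a b : R) : 0 <= kern gamma kappa a b.
Proof. by rewrite /kern !mulr_ge0 ?powR_ge0. Qed.

Lemma nuaux_ge0 (ell t0 : R) n s : (0 <= nuaux gamma kappa ell t0 n s)%E.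
Proof.
elim: n s => [|n IH] s /=; first by rewrite lee_fin kern_ge0.
by apply: integral_ge0 => u _; rewrite mule_ge0 ?lee_fin ?kern_ge0.
Qed.

Lemma kern_le_add (a b : R) :
  kern gamma kappa a b <= kappa * a `^ (gamma - 1) * b `^ (- gamma)
                          + kappa * a `^ (- gamma) * b `^ (gamma - 1).
Proof.
rewrite /kern; case: (leP a b) => _.
  by rewrite lerDr !mulr_ge0 ?powR_ge0.
by rewrite [kappa * b `^ _ * _]mulrAC lerDl !mulr_ge0 ?powR_ge0.
Qed.

(* The terms carrying the indicator of l <= s come from the case u <= s,
   where l <= u forces l <= s. *)
Lemma majorant_mul_kern_le (l s u a b : R) :
  0 < l -> l <= u -> 0 <= a -> 0 <= b ->
  (a * u `^ (- gamma) + b * u `^ (gamma - 1)) * kern gamma kappa u s <=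
  kappa * (s `^ (- gamma) * a + (l <= s)%R%:R * s `^ (gamma - 1) * b) * u `^ (-1)
  + kappa * s `^ (- gamma) * b * u `^ ((2 * gamma - 1) - 1)
  + kappa * (l <= s)%R%:R * s `^ (gamma - 1) * a * u `^ (- (2 * gamma - 1) - 1).
Proof.
move=> l0 lu a0 b0; have u0 : 0 < u := lt_le_trans l0 lu.
have -> : u `^ (-1) = u `^ (- gamma) * u `^ (gamma - 1).
  by rewrite -powRD_gt0 //; congr powR; ring.
have -> : u `^ ((2 * gamma - 1) - 1) = u `^ (gamma - 1) * u `^ (gamma - 1).
  by rewrite -powRD_gt0 //; congr powR; ring.
have -> : u `^ (- (2 * gamma - 1) - 1) = u `^ (- gamma) * u `^ (- gamma).
  by rewrite -powRD_gt0 //; congr powR; ring.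
have I0 : 0 <= (l <= s)%R%:R :> R by [].
set x := u `^ (- gamma); set y := u `^ (gamma - 1).
have [x0 y0] : 0 <= x /\ 0 <= y by rewrite !powR_ge0.
rewrite /kern -subr_ge0; case: (leP u s) => [us|su].
- rewrite (le_trans lu us) mulr1n -/x -/y.
  set D := _ - _; have -> : D = kappa * s `^ (- gamma) * (a * x * y + b * y * y).
    by rewrite /D; ring.
  by rewrite !mulr_ge0 ?addr_ge0 ?mulr_ge0 ?powR_ge0.
- rewrite -/x -/y; set D := _ - _.
  have -> : D = kappa * (l <= s)%R%:R * s `^ (gamma - 1) * (b * x * y + a * x * x).
    by rewrite /D; ring.
  by rewrite !mulr_ge0 ?addr_ge0 ?mulr_ge0 ?powR_ge0.
Qed.

End kernel.

Section nu_bound.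
Variables (R : realType) (gamma kappa ell t0 : R).
Hypotheses (gamma_gt : 2^-1 < gamma) (gamma_lt1 : gamma < 1) (kappa_gt0 : 0 < kappa).
Hypotheses (ell_gt0 : 0 < ell) (ell_lt1 : ell < 1).
Local Notation mu := (@lebesgue_measure R).
Local Notation q := (2 * gamma - 1).
Local Notation c := (kappa / (2 * gamma - 1)).
Local Notation L := (ln ell^-1).
Local Notation nu_ := (nuaux gamma kappa ell t0).
Local Notation ab := (abaux gamma kappa c ell t0).

Let q_gt0 : 0 < q. Proof. by move: gamma_gt; lra. Qed.

Let L_ge0 : 0 <= L. Proof. by rewrite ln_ge0 // invf_ge1 // ltW. Qed.

Lemma abaux_ge0 n : 0 <= (ab n).1 /\ 0 <= (ab n).2.
Proof.
have k0 := ltW kappa_gt0; have c0 : 0 <= c by rewrite divr_ge0 ?ltW.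
elim: n => [|n [a0 b0]] /=; split.
all: by apply: mulr_ge0; rewrite // ?addr_ge0 ?mulr_ge0 ?powR_ge0.
Qed.

(* c - kappa = kappa (2 - 2 gamma) / q is nonnegative as gamma < 1, and
   c = kappa / q absorbs the two factors 1/q. *)
Lemma majorant_integral_le_recursion (a b s I : R) :
  0 <= a -> 0 <= b -> 0 <= I ->
  kappa * (s `^ (- gamma) * a + I * s `^ (gamma - 1) * b) * L
  + kappa * s `^ (- gamma) * b * (1 - ell `^ q) / q
  + kappa * I * s `^ (gamma - 1) * a * (ell `^ (- q) - 1) / q
  <= c * (a * L + b) * s `^ (- gamma)
     + I * (c * (a * ell `^ (1 - 2 * gamma) + b * L) * s `^ (gamma - 1)).
Proof.
move=> a0 b0 I0.
have k0 := ltW kappa_gt0; have q0 := ltW q_gt0.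
have two_sub_ge0 : 0 <= 2 - 2 * gamma by move: gamma_lt1; lra.
have -> : - q = 1 - 2 * gamma by ring.
rewrite -subr_ge0; set D := _ - _.
have -> : D = kappa * (2 - 2 * gamma) / q
                * (s `^ (- gamma) * a + I * s `^ (gamma - 1) * b) * L
              + kappa * s `^ (- gamma) * b * ell `^ q / q
              + I * kappa * s `^ (gamma - 1) * a / q.
  by rewrite /D; field; rewrite gt_eqF.
by rewrite !addr_ge0 //;
  do ?[assumption | exact: powR_ge0 | apply: mulr_ge0 | apply: addr_ge0 | rewrite invr_ge0].
Qed.

Lemma nuaux_succ_le n s : 0 < s ->
  (forall u, ell <= u ->
     (nu_ n u <= ((ab n).1 * u `^ (- gamma) + (ab n).2 * u `^ (gamma - 1))%:E)%E) ->
  (nu_ n.+1 s <= ((ab n.+1).1 * s `^ (- gamma)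
      + (if ell <= s then (ab n.+1).2 * s `^ (gamma - 1) else 0))%:E)%E.
Proof.
move=> s0 IH; have [a0 b0] := abaux_ge0 n; have k0 := ltW kappa_gt0.
have -> : (if ell <= s then (ab n.+1).2 * s `^ (gamma - 1) else 0)
          = (ell <= s)%R%:R * ((ab n.+1).2 * s `^ (gamma - 1)).
  by case: ifP; rewrite /= ?mulr1n ?mul1r ?mul0r.
rewrite [nu_ n.+1 s]/=.
apply: le_trans.
  apply: (@ge0_le_integral_nonmeas _ _ _ mu _ _ (fun u : R =>
      (kappa * (s `^ (- gamma) * (ab n).1 + (ell <= s)%R%:R * s `^ (gamma - 1) * (ab n).2)
         * u `^ (-1)
       + kappa * s `^ (- gamma) * (ab n).2 * u `^ (q - 1)
       + kappa * (ell <= s)%R%:R * s `^ (gamma - 1) * (ab n).1 * u `^ (- q - 1))%:E)).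
  - by move=> u _; rewrite mule_ge0 ?nuaux_ge0 ?lee_fin ?kern_ge0.
  - move=> u; rewrite /= in_itv /= => /andP[lu _].
    apply: le_trans (lee_wpmul2r _ (IH u lu)) _; first by rewrite lee_fin kern_ge0.
    by rewrite -EFinM lee_fin; apply: majorant_mul_kern_le.
rewrite integral_l1_ln_powR ?gt_eqF // lee_fin.
exact: majorant_integral_le_recursion.
Qed.

Lemma nuaux_le_majorant n u : ell <= u ->
  (nu_ n u <= ((ab n).1 * u `^ (- gamma) + (ab n).2 * u `^ (gamma - 1))%:E)%E.
Proof.
elim: n u => [|n IH] u lu; first by rewrite lee_fin kern_le_add ?ltW.
by have := nuaux_succ_le n u (lt_le_trans ell_gt0 lu) IH; rewrite lu.
Qed.

End nu_bound.

Theorem lemma2p9 (R : realType) (gamma kappa : R) :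
  2^-1 < gamma -> gamma < 1 -> 0 < kappa ->
  exists c : R, 0 < c /\
    forall (ell t0 : R) (n : nat) (s : R),
      0 < ell -> ell < 1 -> 0 < t0 -> t0 < 1 -> (2 <= n)%N -> 0 < s -> s < 1 ->
      (nu gamma kappa ell t0 n s <=
        (alpha gamma kappa c ell t0 n * s `^ (- gamma)
         + (if ell <= s then beta gamma kappa c ell t0 n * s `^ (gamma - 1) else 0))%:E)%E.
Proof.
move=> gamma_gt gamma_lt1 kappa_gt0.
exists (kappa / (2 * gamma - 1)); split; first by rewrite divr_gt0 //; lra.
move=> ell t0 [|[|n]] s ell_gt0 ell_lt1 _ _ // _ s_gt0 _.
rewrite /nu /alpha /beta /=.
by apply: nuaux_succ_le => // u; apply: nuaux_le_majorant.
Qed.
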